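(* Let $T$ be a decision tree of depth $d$ computing $f:\{-1,1\}^n\to\{0,1\}$ with $p=\Pr_x[f(x)=1]$ for uniform $x$. Then $$\sum_{j=1}^n\ \sum_{v:\,\mathrm{next}(v)=j}p_v\cdot|\widehat{A_v}(\{j\})|\ \le\ O\big(\sqrt d\cdot p\cdot\sqrt{\ln(e/p)}\big),$$ with $O(\cdot)$ hiding a universal constant.
   Context: For a vertex $v$ of $T$: $p_v$ is the probability that the computation path of $T$ on a uniformly random input passes through $v$; $A_v:\{-1,1\}^n\to\{0,1\}$ is the function computed by the subtree rooted at $v$; $\mathrm{next}(v)$ is the index of the variable queried at $v$. Fourier coefficients: $\hat g(S)=\mathbb E_x[g(x)\prod_{i\in S}x_i]$ for uniform $x$. *)

From mathcomp Require Import all_boot all_order all_algebra.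
From mathcomp Require Import all_classical all_reals all_analysis.
Set Implicit Arguments. Unset Strict Implicit. Unset Printing Implicit Defensive.
Import Order.TTheory GRing.Theory Num.Theory.
Local Open Scope ring_scope.

(* Inputs x in {-1,1}^n are encoded as bit tuples: bit b stands for the
   value (-1)^b, i.e. false ~ +1 and true ~ -1. *)
Definition spm (R : ringType) (b : bool) : R := if b then -1 else 1.

(* Decision trees: a leaf outputs a bit (0/1); a node queries variable i
   and goes to the left subtree when x_i = +1 (bit false), right when -1. *)
Inductive dtree := Leaf of bool | Node of nat & dtree & dtree.

Fixpoint depth (T : dtree) : nat :=
  match T with Leaf _ => 0 | Node _ l r => (maxn (depth l) (depth r)).+1 end.

Fixpoint wf_dtree (n : nat) (used : seq nat) (T : dtree) : bool :=
  match T with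
  | Leaf _ => true
  | Node i l r => [&& (i < n)%N, i \notin used,
                     wf_dtree n (i :: used) l & wf_dtree n (i :: used) r]
  end.

Fixpoint dt_eval n (T : dtree) (x : n.-tuple bool) : bool :=
  match T with
  | Leaf b => b
  | Node i l r => if nth false x i then dt_eval r x else dt_eval l x
  end.

(* vertices are addressed by the path (seq of branch bits) from the root *)
Fixpoint subtree (T : dtree) (a : seq bool) : dtree :=
  match a, T with
  | [::], _ => T
  | b :: a', Node _ l r => subtree (if b then r else l) a'
  | _ :: _, Leaf _ => T
  end.

Fixpoint reaches n (T : dtree) (x : n.-tuple bool) (a : seq bool) : bool :=
  match a, T with
  | [::], _ => true
  | b :: a', Node i l r => (nth false x i == b) && reaches (if b then r else l) x a'
  | _ :: _, Leaf _ => false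
  end.

Fixpoint internals (T : dtree) : seq (seq bool) :=
  match T with
  | Leaf _ => [::]
  | Node _ l r => [::] :: map (cons false) (internals l)
                        ++ map (cons true) (internals r)
  end.

(* next(v): index of the variable queried at v (only used for internal v) *)
Definition dt_next (T : dtree) (a : seq bool) : nat :=
  if subtree T a is Node i _ _ then i else 0%N.

Definition Ex (R : realType) n (g : n.-tuple bool -> R) : R :=
  (\sum_(x : n.-tuple bool) g x) / (2 ^+ n)%:R.

Definition pv (R : realType) n (T : dtree) (a : seq bool) : R :=
  Ex (fun x : n.-tuple bool => (reaches T x a)%:R).

Definition Av n (T : dtree) (a : seq bool) (x : n.-tuple bool) : bool :=
  dt_eval (subtree T a) x.

Definition fourier1 (R : realType) n (g : n.-tuple bool -> bool) (j : nat) : R :=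
  Ex (fun x : n.-tuple bool => (g x)%:R * spm R (nth false x j)).

Definition prob1 (R : realType) n (T : dtree) : R :=
  Ex (fun x : n.-tuple bool => (dt_eval T x)%:R).

(* Regrouped by vertex, the left-hand side is at most
   S(T) = sum_v p_v |hat A_v({next v})|.  Write m(T) = Pr[T accepts].  If the
   root queries x_i and has subtrees l, r, then m(T) = (m(l) + m(r))/2, the
   root coefficient is (m(l) - m(r))/2, and p_v halves on entering a subtree,
   so S(T) = |m(l) - m(r)|/2 + (S(l) + S(r))/2.  By induction on T,
   S(T) <= mu d m(T) - nu m(T) ln m(T) whenever mu nu >= 9: the inductive step
   is the two-point inequality |a - b|/2 <= mu q + nu G(a, b), where q = (a+b)/2
   and G is the Jensen gap of x ln x; it follows from
   G(a, b) >= (sqrt a - sqrt q)^2 / 2 (two uses of ln t <= t - 1) and AM-GM.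
   Choosing mu = 3 sqrt(L/d) and nu = 3 sqrt(d/L) with L = ln(e/p) = 1 - ln p
   gives the bound with C = 6. *)

From mathcomp Require Import all_boot all_order all_algebra.
From mathcomp Require Import all_classical all_reals all_analysis.
From mathcomp Require Import ring lra.
Set Implicit Arguments. Unset Strict Implicit.
Import Order.TTheory GRing.Theory Num.Theory.
Local Open Scope ring_scope.

Section XLnX.
Variable R : realType.
Implicit Types a b x y : R.

Definition xlnx x : R := x * ln x.

Definition xlnx_gap a b : R := (xlnx a + xlnx b) / 2 - xlnx ((a + b) / 2).

Lemma sub_le_mul_lnB x y : 0 <= x -> 0 < y -> x - y <= x * (ln x - ln y).
Proof.
rewrite le0r => /predU1P[->|x_gt0] y_gt0; first by rewrite mul0r; lra.
have : ln (y / x) <= y / x - 1.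
  have := @le_ln1Dx R (y / x - 1); rewrite addrCA subrr addr0; apply.
  by have := divr_gt0 y_gt0 x_gt0; lra.
rewrite ln_div ?posrE // => le_ln.
have := ler_wpM2l (ltW x_gt0) le_ln.
have -> : x * (y / x - 1) = y - x by field; rewrite gt_eqF.
lra.
Qed.

Lemma sqrt_sub_le_mul_lnB x y : 0 <= x -> 0 < y ->
  2 * Num.sqrt x * (Num.sqrt x - Num.sqrt y) <= x * (ln x - ln y).
Proof.
rewrite le0r => /predU1P[->|x_gt0] y_gt0; first by rewrite sqrtr0 !(mulr0, mul0r).
have ln_sq (z : R) : 0 < z -> ln z = 2 * ln (Num.sqrt z).
  by move=> z_gt0; rewrite -{1}(sqr_sqrtr (ltW z_gt0)) lnXn ?sqrtr_gt0 // mulr_natl.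
have sy_gt0 : 0 < Num.sqrt y by rewrite sqrtr_gt0.
have -> : x * (ln x - ln y)
    = 2 * Num.sqrt x * (Num.sqrt x * (ln (Num.sqrt x) - ln (Num.sqrt y))).
  by rewrite (ln_sq x) // (ln_sq y) // -{1}(sqr_sqrtr (ltW x_gt0)); ring.
by rewrite ler_wpM2l ?mulr_ge0 ?sqrtr_ge0 // sub_le_mul_lnB ?sqrtr_ge0.
Qed.

Lemma xlnx_gap_ge_sqr a b : 0 <= a -> 0 <= b ->
  (Num.sqrt a - Num.sqrt ((a + b) / 2)) ^+ 2 / 2 <= xlnx_gap a b.
Proof.
move=> a_ge0 b_ge0; set q := (a + b) / 2.
have [q0|q_neq0] := eqVneq q 0.
  have [a0 b0] : a = 0 /\ b = 0 by rewrite /q in q0; split; lra.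
  by rewrite q0 /xlnx_gap /xlnx a0 b0 !(mul0r, add0r, sqrtr0, subrr) expr0n /= mul0r.
have {q_neq0} q_gt0 : 0 < q by rewrite lt0r q_neq0 /q; lra.
have Ha := sqrt_sub_le_mul_lnB a_ge0 q_gt0.
have Hb := sub_le_mul_lnB b_ge0 q_gt0.
have -> : xlnx_gap a b = (a * (ln a - ln q) + b * (ln b - ln q)) / 2.
  by rewrite /xlnx_gap /xlnx /q; field.
have -> : (Num.sqrt a - Num.sqrt q) ^+ 2
    = 2 * Num.sqrt a * (Num.sqrt a - Num.sqrt q) - (Num.sqrt a ^+ 2 - Num.sqrt q ^+ 2).
  by ring.
have : a - q = q - b by rewrite /q; field.
rewrite (sqr_sqrtr a_ge0) (sqr_sqrtr (ltW q_gt0)); lra.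
Qed.

Lemma sqr_half_diff_le_xlnx_gap a b : 0 <= a -> 0 <= b ->
  ((a - b) / 2) ^+ 2 <= 18 * ((a + b) / 2) * xlnx_gap a b.
Proof.
move=> a_ge0 b_ge0; have := xlnx_gap_ge_sqr a_ge0 b_ge0; set q := (a + b) / 2.
have q_ge0 : 0 <= q by rewrite /q; lra.
have -> : (a - b) / 2 = Num.sqrt a ^+ 2 - Num.sqrt q ^+ 2.
  by rewrite !sqr_sqrtr // /q; field.
rewrite -[X in 18 * X](sqr_sqrtr q_ge0).
have : Num.sqrt a ^+ 2 <= 2 * Num.sqrt q ^+ 2 by rewrite !sqr_sqrtr // /q; lra.
have := sqrtr_ge0 a; have := sqrtr_ge0 q.
move: (Num.sqrt a) (Num.sqrt q) => s t t_ge0 s_ge0 st2 gap_ge.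
have s_le : s <= 2 * t by rewrite -ler_sqr ?nnegrE ?mulr_ge0 //; nra.
have sum_sqr : (s + t) ^+ 2 <= (3 * t) ^+ 2.
  by rewrite ler_sqr ?nnegrE ?addr_ge0 ?mulr_ge0 //; lra.
have -> : (s ^+ 2 - t ^+ 2) ^+ 2 = (s + t) ^+ 2 * (s - t) ^+ 2 by ring.
apply: le_trans (ler_wpM2r (sqr_ge0 _) sum_sqr) _.
have -> : 18 * t ^+ 2 * xlnx_gap a b = (3 * t) ^+ 2 * (2 * xlnx_gap a b) by ring.
rewrite ler_wpM2l ?sqr_ge0 //; lra.
Qed.

Lemma half_diff_le_mu_nu a b (mu nu : R) : 0 <= a -> 0 <= b ->
  0 <= mu -> 0 <= nu -> 9 <= mu * nu ->
  `|(a - b) / 2| <= mu * ((a + b) / 2) + nu * xlnx_gap a b.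
Proof.
move=> a_ge0 b_ge0 mu_ge0 nu_ge0 mu_nu.
have sqr_le := sqr_half_diff_le_xlnx_gap a_ge0 b_ge0.
have gap_ge0 : 0 <= xlnx_gap a b.
  by apply: le_trans (xlnx_gap_ge_sqr a_ge0 b_ge0); rewrite divr_ge0 ?sqr_ge0.
have q_ge0 : 0 <= (a + b) / 2 by lra.
have rhs_ge0 : 0 <= mu * ((a + b) / 2) + nu * xlnx_gap a b.
  by apply: addr_ge0; apply: mulr_ge0.
rewrite -ler_sqr ?nnegrE // real_normK ?num_real //.
apply: le_trans sqr_le _.
move: ((a + b) / 2) (xlnx_gap a b) q_ge0 gap_ge0 => q g q_ge0 g_ge0.
have -> : (mu * q + nu * g) ^+ 2 = (mu * q - nu * g) ^+ 2 + 4 * (mu * nu) * (q * g).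
  by ring.
have := ler_wpM2r (mulr_ge0 q_ge0 g_ge0) mu_nu.
have := sqr_ge0 (mu * q - nu * g); have := mulr_ge0 q_ge0 g_ge0.
lra.
Qed.
End XLnX.

Lemma sum_ord_by_key_le (R : numDomainType) (I : Type) (s : seq I)
    (key : I -> nat) (F : I -> nat -> R) m :
  (forall v, 0 <= F v (key v)) ->
  \sum_(j < m) \sum_(v <- s | key v == j) F v j <= \sum_(v <- s) F v (key v).
Proof.
move=> F_ge0; rewrite (exchange_big_dep xpredT) //=; apply: ler_sum => v _.
have [lt_km|le_mk] := ltnP (key v) m.
  by rewrite (big_pred1 (Ordinal lt_km)) // => j /=; rewrite -val_eqE eq_sym.
rewrite big_pred0 // => j; apply: gtn_eqF; exact: leq_trans (ltn_ord j) le_mk.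
Qed.

Section Cube.
Variables (R : realType) (n : nat).
Implicit Types (x : n.-tuple bool) (f g : n.-tuple bool -> R).

Definition flip (i : nat) x : n.-tuple bool :=
  [tuple if j == i :> nat then ~~ tnth x j else tnth x j | j < n].

Lemma nth_flip i x j : (i < n)%N ->
  nth false (flip i x) j = if j == i then ~~ nth false x j else nth false x j.
Proof.
move=> lt_in; have [lt_jn|le_nj] := ltnP j n.
  by rewrite -[j]/(nat_of_ord (Ordinal lt_jn)) -!tnth_nth tnth_mktuple.
rewrite !nth_default ?size_tuple //.
by case: eqP => // ji; move: lt_in; rewrite -ji ltnNge le_nj.
Qed.

Lemma flipK i : (i < n)%N -> involutive (flip i).
Proof.
move=> lt_in x; apply: eq_from_tnth => j.
by rewrite !(tnth_nth false) !nth_flip //; case: eqP; rewrite ?negbK.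
Qed.

Lemma cube_size_neq0 : (2 ^+ n)%:R != 0 :> R.
Proof. by rewrite pnatr_eq0 -/(expn 2 n) expn_eq0. Qed.

Lemma Ex_ext f g : f =1 g -> Ex f = Ex g.
Proof. by move=> fg; rewrite /Ex (eq_bigr _ (fun x _ => fg x)). Qed.

Lemma ExD f g : Ex (fun x => f x + g x) = Ex f + Ex g.
Proof. by rewrite /Ex big_split /= mulrDl. Qed.

Lemma ExB f g : Ex (fun x => f x - g x) = Ex f - Ex g.
Proof. by rewrite /Ex sumrB mulrBl. Qed.

Lemma Ex_le f g : (forall x, f x <= g x) -> Ex f <= Ex g.
Proof. by move=> fg; rewrite ler_wpM2r ?invr_ge0 ?ler0n // ler_sum. Qed.

Lemma Ex_const (c : R) : Ex (fun _ : n.-tuple bool => c) = c.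
Proof.
rewrite /Ex sumr_const card_tuple card_bool -[c *+ _]mulr_natr.
by rewrite mulfK ?cube_size_neq0.
Qed.

(* [flip i] swaps the halves [x_i = b] and [x_i = ~~ b] of the cube. *)
Lemma Ex_half i (b : bool) g : (i < n)%N -> (forall x, g (flip i x) = g x) ->
  Ex (fun x => (nth false x i == b)%:R * g x) = Ex g / 2.
Proof.
move=> lt_in g_flip.
pose half c := \sum_(x : n.-tuple bool) (nth false x i == c)%:R * g x.
have half_flip : half b = half (~~ b).
  rewrite /half (reindex_inj (can_inj (flipK lt_in))) /=.
  apply: eq_bigr => x _; rewrite g_flip nth_flip // eqxx.
  by case: (nth _ _ _); case: b.
have halves : half b + half (~~ b) = \sum_x g x.
  rewrite /half -big_split /=; apply: eq_bigr => x _.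
  by case: (nth _ _ _); case: (b); rewrite /= ?mul0r ?mul1r ?add0r ?addr0.
rewrite /Ex -/(half b) -halves -half_flip.
by field; rewrite cube_size_neq0.
Qed.

End Cube.

Section Trees.
Variables (R : realType) (n : nat).
Implicit Types (x : n.-tuple bool) (T l r : dtree).

Lemma eval_flip T used i x : (i < n)%N -> wf_dtree n used T -> i \in used ->
  dt_eval T (flip i x) = dt_eval T x.
Proof.
move=> lt_in; elim: T used => [b|j l IHl r IHr] used //=.
case/and4P => _ j_new wf_l wf_r i_used.
have i_used' : i \in j :: used by rewrite inE i_used orbT.
rewrite nth_flip // (_ : j == i = false); last by apply: contraNF j_new => /eqP ->.
by case: (nth _ _ _); [apply: IHr wf_r i_used' | apply: IHl wf_l i_used'].
Qed.

Lemma reaches_flip T used i x a : (i < n)%N -> wf_dtree n used T -> i \in used ->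
  reaches T (flip i x) a = reaches T x a.
Proof.
move=> lt_in; elim: T used a => [b|j l IHl r IHr] used [|c a] //=.
case/and4P => _ j_new wf_l wf_r i_used.
have i_used' : i \in j :: used by rewrite inE i_used orbT.
rewrite nth_flip // (_ : j == i = false); last by apply: contraNF j_new => /eqP ->.
by case: c; [rewrite (IHr _ _ wf_r i_used') | rewrite (IHl _ _ wf_l i_used')].
Qed.

Lemma prob1_ge0 T : 0 <= prob1 R n T.
Proof. by rewrite -(Ex_const n 0); apply: Ex_le => x; case: dt_eval. Qed.

Lemma prob1_le1 T : prob1 R n T <= 1.
Proof. by rewrite -(Ex_const n 1); apply: Ex_le => x; case: dt_eval. Qed.

Lemma pv_ge0 T v : 0 <= pv R n T v.
Proof. by rewrite -(Ex_const n 0); apply: Ex_le => x; case: reaches. Qed.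

Lemma prob1_Leaf b : prob1 R n (Leaf b) = b%:R.
Proof. exact: Ex_const. Qed.

Lemma prob1_Node i l r used : wf_dtree n used (Node i l r) ->
  prob1 R n (Node i l r) = (prob1 R n l + prob1 R n r) / 2.
Proof.
case/and4P => lt_in _ wf_l wf_r; have i_used := mem_head i used.
rewrite /prob1 (@Ex_ext _ _ _ (fun x => (nth false x i == false)%:R * (dt_eval l x)%:R
    + (nth false x i == true)%:R * (dt_eval r x)%:R)); last first.
  by move=> x /=; case: (nth _ _ _); rewrite /= ?mul0r ?mul1r ?add0r ?addr0.
rewrite ExD !(Ex_half _ lt_in) ?mulrDl // => x;
  by rewrite ?(eval_flip _ lt_in wf_l) ?(eval_flip _ lt_in wf_r).
Qed.

Lemma fourier1_root i l r used : wf_dtree n used (Node i l r) ->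
  fourier1 R (@Av n (Node i l r) [::]) i = (prob1 R n l - prob1 R n r) / 2.
Proof.
case/and4P => lt_in _ wf_l wf_r; have i_used := mem_head i used.
rewrite /fourier1 (@Ex_ext _ _ _ (fun x => (nth false x i == false)%:R * (dt_eval l x)%:R
    - (nth false x i == true)%:R * (dt_eval r x)%:R)); last first.
  move=> x; rewrite /Av /spm /=.
  by case: (nth _ _ _); rewrite /= ?mul0r ?mul1r ?subr0 ?sub0r ?mulrN1 ?mulr1.
rewrite ExB !(Ex_half _ lt_in) ?mulrBl // => x;
  by rewrite ?(eval_flip _ lt_in wf_l) ?(eval_flip _ lt_in wf_r).
Qed.

Lemma pv_nil T : pv R n T [::] = 1.
Proof. by rewrite /pv (@Ex_ext _ _ _ (fun=> 1)) ?Ex_const // => x; case: T. Qed.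

Lemma pv_cons i l r used (b : bool) v : wf_dtree n used (Node i l r) ->
  pv R n (Node i l r) (b :: v) = pv R n (if b then r else l) v / 2.
Proof.
case/and4P => lt_in _ wf_l wf_r; have i_used := mem_head i used.
rewrite /pv /= (@Ex_ext _ _ _ (fun x => (nth false x i == b)%:R *
    (reaches (if b then r else l) x v)%:R)); last first.
  by move=> x; case: (_ == _); rewrite /= ?mul0r ?mul1r.
by rewrite (Ex_half _ lt_in) // => x; case: b; rewrite (reaches_flip _ _ lt_in _ i_used).
Qed.

Definition dt_fourier_mass T : R :=
  \sum_(v <- internals T) pv R n T v * `|fourier1 R (@Av n T v) (dt_next T v)|.

Lemma dt_fourier_mass_Node i l r used : wf_dtree n used (Node i l r) ->
  dt_fourier_mass (Node i l r)
    = `|(prob1 R n l - prob1 R n r) / 2| + (dt_fourier_mass l + dt_fourier_mass r) / 2.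
Proof.
move=> wf; rewrite {1}/dt_fourier_mass /= big_cons big_cat !big_map pv_nil mul1r.
rewrite (fourier1_root wf); congr (_ + _).
rewrite mulrDl /dt_fourier_mass !mulr_suml.
by congr (_ + _); apply: eq_bigr => v _; rewrite (pv_cons _ _ wf) mulrAC.
Qed.

Lemma dt_fourier_mass_le_potential (mu nu : R) T used d :
  0 <= mu -> 0 <= nu -> 9 <= mu * nu -> wf_dtree n used T -> (depth T <= d)%N ->
  dt_fourier_mass T <= mu * d%:R * prob1 R n T - nu * xlnx (prob1 R n T).
Proof.
move=> mu_ge0 nu_ge0 mu_nu; elim: T used d => [b|i l IHl r IHr] used d wf_T.
  rewrite /dt_fourier_mass big_nil prob1_Leaf /xlnx => _.
  by case: b wf_T => _; rewrite ?ln1 !(mulr0, mul0r, mulr1, subr0) ?mulr_ge0.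
case: d => [|d] //=; rewrite ltnS geq_max => /andP[le_l le_r].
have /and4P[_ _ wf_l wf_r] := wf_T.
rewrite (dt_fourier_mass_Node wf_T) (prob1_Node wf_T) -[d.+1%:R]natr1.
have := IHl _ _ wf_l le_l; have := IHr _ _ wf_r le_r.
have := half_diff_le_mu_nu (prob1_ge0 l) (prob1_ge0 r) mu_ge0 nu_ge0 mu_nu.
rewrite /xlnx_gap; lra.
Qed.

End Trees.

Lemma exists_mu_nu_potential_le (R : realType) (D p : R) : 0 < D -> 0 <= p <= 1 ->
  exists mu nu : R, [/\ 0 <= mu, 0 <= nu, 9 <= mu * nu &
    mu * D * p - nu * xlnx p <= 6 * Num.sqrt D * p * Num.sqrt (ln (expR 1 / p))].
Proof.
move=> D_gt0 /andP[p_ge0 p_le1].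
have [-> | p_neq0] := eqVneq p 0.
  by exists 3, 3; split; rewrite /xlnx ?(mulr0, mul0r, subr0) //; lra.
have p_gt0 : 0 < p by rewrite lt0r p_neq0.
have lnpE : ln p = 1 - ln (expR 1 / p).
  by rewrite ln_div ?posrE ?expR_gt0 // expRK; ring.
set L := ln (expR 1 / p) in lnpE *.
have L_ge1 : 1 <= L by have := ln_le0 p_le1; lra.
have sqrD := sqr_sqrtr (ltW D_gt0); have sqrL := sqr_sqrtr (le_trans ler01 L_ge1).
set sD := Num.sqrt D in sqrD *; set sL := Num.sqrt L in sqrL *.
have sD_gt0 : 0 < sD by rewrite sqrtr_gt0.
have sL_gt0 : 0 < sL by rewrite sqrtr_gt0; lra.
exists (3 * sL / sD), (3 * sD / sL); split.
- by rewrite ltW // divr_gt0 ?mulr_gt0.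
- by rewrite ltW // divr_gt0 ?mulr_gt0.
- by rewrite (_ : _ * _ = 9) //; field; rewrite !gt_eqF.
have -> : 3 * sL / sD * D * p - 3 * sD / sL * xlnx p = 6 * sD * p * sL - 3 * sD * p / sL.
  by rewrite /xlnx lnpE -sqrD -sqrL; field; rewrite !gt_eqF.
by rewrite gerBl divr_ge0 ?mulr_ge0 // ltW.
Qed.

Theorem mainTheorem17 (R : realType) :
  exists C : R, 0 < C /\
  forall (n d : nat) (T : dtree),
    wf_dtree n [::] T -> (depth T <= d)%N ->
    let p : R := @prob1 R n T in
    \sum_(j < n) \sum_(v <- internals T | dt_next T v == j)
        @pv R n T v * `|@fourier1 R n (@Av n T v) j|
    <= C * Num.sqrt (d%:R) * p * Num.sqrt (ln (expR 1 / p)).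
Proof.
exists 6; split => [|n d T wf_T le_depth]; first lra.
cbv zeta; set p := prob1 R n T.
apply: le_trans (@sum_ord_by_key_le _ _ _ _
  (fun v j => pv R n T v * `|fourier1 R (@Av n T v) j|) _ _) _ => [v|].
  by rewrite mulr_ge0 ?pv_ge0.
change (dt_fourier_mass R n T <= 6 * Num.sqrt d%:R * p * Num.sqrt (ln (expR 1 / p))).
have [d0|d_gt0] := posnP d.
  move: le_depth; rewrite d0 sqrtr0 mulr0 !mul0r; case: T wf_T {p} => // b _ _.
  by rewrite /dt_fourier_mass big_nil.
have d_pos : 0 < d%:R :> R by rewrite ltr0n.
have p_bounds : 0 <= p <= 1 by rewrite prob1_ge0 prob1_le1.
have [mu [nu [mu_ge0 nu_ge0 mu_nu bound]]] := exists_mu_nu_potential_le d_pos p_bounds.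
by apply: le_trans bound; apply: dt_fourier_mass_le_potential wf_T le_depth.
Qed.
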